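(* Let $p\geq 1$, $\vec n=(n_1,\dots,n_p)\in\mathbb N_0^p$, $N\in\mathbb N_0$ with $|\vec n|\le N$, and let $\alpha_1,\dots,\alpha_p,\beta,x\in\mathbb R$ be such that all Pochhammer symbols appearing in denominators below are nonzero. Then $$\sum_{l_1=0}^{n_1}\cdots\sum_{l_p=0}^{n_p}\frac{(-N)_{l_1+\cdots+l_p}\,(x)_{l_1+\cdots+l_p}}{(x+\beta+1)_{l_1+\cdots+l_p}}\,C^{l_1,\dots,l_p}_{\vec n}=\frac{(\beta+1)_{|\vec n|}(-N)_{|\vec n|}}{(x+\beta+1)_{|\vec n|}}\prod_{q=1}^p\frac{(\alpha_q-x+1)_{n_q}}{(\alpha_q+\beta+|\vec n|+1)_{n_q}}.$$
   Context: $(a)_m=a(a+1)\cdots(a+m-1)$, $(a)_0=1$; $|\vec n|=n_1+\cdots+n_p$. The coefficients (those of the multiple Hahn type II polynomials) are $$C^{l_1,\dots,l_p}_{\vec n}=\frac{(-N)_{|\vec n|}}{(-N)_{l_1+\cdots+l_p}}\prod_{i=1}^p\frac{(\alpha_i+1)_{n_i}}{(\alpha_i+\beta+|\vec n|+1)_{n_i}}\frac{(-n_i)_{l_i}}{l_i!}\frac{(\alpha_i+\beta+\sum_{k=1}^i n_k+1)_{\sum_{j=i}^p l_j}}{(\alpha_i+1)_{\sum_{j=i}^p l_j}}\prod_{i=1}^{p-1}\frac{(\alpha_i+n_i+1)_{\sum_{j=i+1}^p l_j}}{(\alpha_i+\beta+\sum_{k=1}^i n_k+1)_{\sum_{j=i+1}^p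 l_j}}.$$ *)

From mathcomp Require Import all_boot all_order all_algebra.
Set Implicit Arguments. Unset Strict Implicit. Unset Printing Implicit Defensive.
Import Order.TTheory GRing.Theory Num.Theory.
Local Open Scope ring_scope.

Definition poch {R : pzRingType} (a : R) (m : nat) : R :=
  \prod_(k < m) (a + k%:R).

(* |n| = n_1 + ... + n_p  (indices are 0-based: i : 'I_p stands for i+1) *)
Definition vabs {p : nat} (n : 'I_p -> nat) : nat := (\sum_(i < p) n i)%N.

Definition psum {p : nat} (n : 'I_p -> nat) (i : 'I_p) : nat :=
  (\sum_(k < p | (k <= i)%N) n k)%N.
Definition tsum {p : nat} (l : 'I_p -> nat) (i : 'I_p) : nat :=
  (\sum_(j < p | (i <= j)%N) l j)%N.
Definition tsum1 {p : nat} (l : 'I_p -> nat) (i : 'I_p) : nat :=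
  (\sum_(j < p | (i < j)%N) l j)%N.

Definition hahnC {R : fieldType} {p : nat} (N : nat) (alpha : 'I_p -> R) (beta : R)
    (n l : 'I_p -> nat) : R :=
  poch (- N%:R) (vabs n) / poch (- N%:R) (vabs l) *
  (\prod_(i < p)
     (poch (alpha i + 1) (n i) / poch (alpha i + beta + (vabs n)%:R + 1) (n i) *
      (poch (- (n i)%:R) (l i) / (l i)`!%:R) *
      (poch (alpha i + beta + (psum n i)%:R + 1) (tsum l i) /
       poch (alpha i + 1) (tsum l i)))) *
  (\prod_(i < p | (i.+1 < p)%N)
     (poch (alpha i + (n i)%:R + 1) (tsum1 l i) /
      poch (alpha i + beta + (psum n i)%:R + 1) (tsum1 l i))).

From mathcomp Require Import all_boot all_order all_algebra.
From mathcomp Require Import ring zify.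
Set Implicit Arguments. Unset Strict Implicit. Unset Printing Implicit Defensive.
Import Order.TTheory GRing.Theory Num.Theory.
Local Open Scope ring_scope.

(* Induction on p, peeling off the first summation index l_1.  Once the
   l-independent factors (-N)_|n| and prod (alpha_i+1)_{n_i}/(alpha_i+beta+|n|+1)_{n_i}
   are pulled out, the sum over l_1 with the other indices fixed is a terminating
   balanced 3F2, summed by the Pfaff-Saalschutz formula; what is left is the same
   kind of (p-1)-fold sum with beta replaced by beta + n_1.  Pfaff-Saalschutz
   itself follows from Chu-Vandermonde: expand (b)_k/(d)_k as a Chu-Vandermonde
   sum, exchange the two sums, and sum twice more. *)

Section Pochhammer.
Variable R : comPzRingType.
Implicit Types (a b : R) (m n k j : nat).

Lemma poch0 a : poch a 0 = 1.
Proof. by rewrite /poch big_ord0. Qed.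

Lemma pochS a m : poch a m.+1 = poch a m * (a + m%:R).
Proof. by rewrite /poch big_ord_recr. Qed.

Lemma poch1 a : poch a 1 = a.
Proof. by rewrite pochS poch0 mul1r addr0. Qed.

Lemma pochD a m k : poch a (m + k) = poch a m * poch (a + m%:R) k.
Proof.
elim: k => [|k IH]; first by rewrite addn0 poch0 mulr1.
by rewrite addnS !pochS IH natrD addrA mulrA.
Qed.

Lemma pochD_comm a m k : poch a m * poch (a + m%:R) k = poch a k * poch (a + k%:R) m.
Proof. by rewrite -!pochD addnC. Qed.

Lemma pochSr a m : poch a m.+1 = a * poch (a + 1) m.
Proof. by rewrite -add1n pochD poch1. Qed.

Lemma poch_oppn_gt n k : (n < k)%N -> poch (- n%:R : R) k = 0.
Proof. by move=> nk; rewrite -(subnKC nk) pochD pochS addNr mulr0 mul0r. Qed.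

Lemma poch_oppn n k : poch (- n%:R : R) k = (-1) ^+ k * ('C(n, k) * k`!)%:R.
Proof.
rewrite bin_ffact; elim: k => [|k IH]; first by rewrite poch0 expr0 ffactn0 mul1r.
rewrite pochS IH ffactnSr natrM exprS.
case: (leqP k n) => kn; first by rewrite natrB //; ring.
by rewrite ffact_small // mul0r !mulr0 mul0r.
Qed.

Lemma poch_reflect b j : poch b j * (-1) ^+ j = poch (- b - j%:R + 1) j.
Proof.
elim: j b => [|j IH] b; first by rewrite !poch0 expr0 mulr1.
have -> : - b - j.+1%:R + 1 = - b - j%:R by rewrite mulrSr; ring.
by rewrite pochS pochSr -IH exprS; ring.
Qed.

Lemma chu_vandermonde_poch n a c :
  \sum_(k < n.+1) (-1) ^+ k * 'C(n, k)%:R * poch a k * poch (c + k%:R) (n - k)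
  = poch (c - a) n.
Proof.
elim: n a c => [|n IH] a c.
  by rewrite big_ord_recl big_ord0 /= !poch0 addr0 expr0 bin0 !mul1r.
pose U k := (-1) ^+ k * 'C(n, k)%:R * poch a k * poch (c + k%:R) (n.+1 - k).
have sumU : \sum_(k < n.+2) U k = (c + n%:R) * poch (c - a) n.
  rewrite big_ord_recr /= /U bin_small // mulr0 !mul0r addr0 -IH mulr_sumr.
  apply: eq_bigr => k _; have kn : (k <= n)%N by rewrite -ltnS.
  by rewrite subSn // pochS natrB //; ring.
have sumV : \sum_(k < n.+1) - a * ((-1) ^+ k * 'C(n, k)%:R * poch (a + 1) k *
              poch (c + 1 + k%:R) (n - k)) = - a * poch (c - a) n.
  by rewrite -mulr_sumr IH; congr (_ * poch _ _); ring.
have -> : poch (c - a) n.+1 = (c + n%:R) * poch (c - a) n + - a * poch (c - a) n.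
  by rewrite pochS; ring.
rewrite -sumV -sumU big_ord_recl [in RHS]big_ord_recl /U /= !bin0 !expr0 !poch0 subn0.
rewrite -addrA -big_split /=; congr (_ + _); apply: eq_bigr => k _.
have -> : c + k.+1%:R = c + 1 + k%:R by rewrite mulrSr; ring.
by rewrite /bump /= add1n pochSr subSS binS natrD exprS; ring.
Qed.

End Pochhammer.

Section PochhammerField.
Variable R : fieldType.
Implicit Types (a b c : R) (m n k j : nat).

Lemma poch_neq0_le a m k : poch a m != 0 -> (k <= m)%N -> poch a k != 0.
Proof. by move=> + km; rewrite -(subnKC km) pochD mulf_eq0 negb_or => /andP []. Qed.

Lemma poch_neq0_split a m k : poch a (m + k) != 0 ->
  poch a m != 0 /\ poch (a + m%:R) k != 0.
Proof. by rewrite pochD mulf_eq0 negb_or => /andP. Qed.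

End PochhammerField.

Lemma sumr_ord_widen {V : nmodType} (F : nat -> V) m n : (m <= n)%N ->
  (forall j, (m < j <= n)%N -> F j = 0) ->
  \sum_(j < m.+1) F j = \sum_(j < n.+1) F j.
Proof.
move=> mn F0; rewrite -!(big_mkord xpredT F) [RHS](@big_cat_nat _ _ _ m.+1) //=.
rewrite [X in _ + X]big_nat_cond [X in _ + X]big1 ?addr0 // => j /andP [+ _].
exact: F0.
Qed.

Lemma sumr_ord_shift {V : nmodType} (F : nat -> V) j n : (j <= n.+1)%N ->
  (forall k, (k < j)%N -> F k = 0) ->
  \sum_(k < n.+1) F k = \sum_(m < n.+1 - j) F (m + j)%N.
Proof.
move=> jn F0; rewrite -(big_mkord xpredT F) (@big_cat_nat _ _ _ j) //=.
rewrite big_nat_cond big1 ?add0r; last by move=> k /andP [/andP [_ kj] _]; apply: F0.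
by rewrite -{1}(add0n j) big_addn big_mkord.
Qed.

Section HypergeometricSums.
Variable R : numFieldType.
Implicit Types (a b c d y : R) (m n k j : nat).

Lemma fact_neq0 k : (k`!%:R : R) != 0.
Proof. by rewrite pnatr_eq0 -lt0n fact_gt0. Qed.

Lemma poch_oppn_fact n j : (j <= n)%N ->
  poch (- n%:R : R) j / n`!%:R = (-1) ^+ j / (n - j)`!%:R.
Proof.
move=> jn; rewrite poch_oppn -(bin_fact jn) !natrM.
have hC : ('C(n, j)%:R : R) != 0 by rewrite pnatr_eq0 -lt0n bin_gt0.
by field; rewrite hC !fact_neq0.
Qed.

Lemma chu_vandermonde n a c : poch c n != 0 ->
  \sum_(k < n.+1) poch (- n%:R) k / k`!%:R * (poch a k / poch c k)
  = poch (c - a) n / poch c n.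
Proof.
move=> cn; rewrite -chu_vandermonde_poch mulr_suml; apply: eq_bigr => k _.
have kn : (k <= n)%N by rewrite -ltnS.
have [h1 h2] : poch c k != 0 /\ poch (c + k%:R) (n - k) != 0.
  by apply: poch_neq0_split; rewrite subnKC.
rewrite -[in poch c n](subnKC kn) pochD poch_oppn natrM.
by field; rewrite h1 h2 fact_neq0.
Qed.

Lemma chu_vandermonde_falling n j a c : (j <= n)%N -> poch c n != 0 ->
  \sum_(k < n.+1) poch (- n%:R) k * (poch (- k%:R) j / k`!%:R) * (poch a k / poch c k)
  = (-1) ^+ j * poch (- n%:R) j * poch a j * poch (c - a) (n - j) / poch c n.
Proof.
move=> jn cn; have [cj cnj] : poch c j != 0 /\ poch (c + j%:R) (n - j) != 0.
  by apply: poch_neq0_split; rewrite subnKC.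
pose F k := poch (- n%:R) k * (poch (- k%:R) j / k`!%:R) * (poch a k / poch c k).
rewrite (@sumr_ord_shift _ F j n (leqW jn)) => [|k kj]; last first.
  by rewrite /F (poch_oppn_gt _ kj) mul0r mulr0 mul0r.
have term m : poch (- n%:R) (m + j) * (poch (- (m + j)%:R) j / (m + j)`!%:R) *
    (poch a (m + j) / poch c (m + j)) = (-1) ^+ j * poch (- n%:R) j * poch a j / poch c j *
    (poch (- (n - j)%:R) m / m`!%:R * (poch (a + j%:R) m / poch (c + j%:R) m)).
  rewrite poch_oppn_fact ?leq_addl // addnK addnC !pochD natrB // opprB.
  have -> : - n%:R + j%:R = j%:R - n%:R :> R by ring.
  by rewrite !invfM; ring.
rewrite /F (eq_bigr _ (fun (m : 'I__) _ => term m)) -mulr_sumr subSn // chu_vandermonde //.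
rewrite -[in poch c n](subnKC jn) pochD.
have -> : c + j%:R - (a + j%:R) = c - a by ring.
by field; rewrite cj cnj.
Qed.

Lemma pfaff_saalschutz n a b c d y :
  b = c + y + n%:R -> d = a + y + 1 -> poch c n != 0 -> poch d n != 0 ->
  \sum_(k < n.+1) poch (- n%:R) k / k`!%:R * (poch a k * poch b k / (poch c k * poch d k))
  = poch (c - a) n * poch (y + 1) n / (poch c n * poch d n).
Proof.
move=> eb ed cn dn.
have expand (k : 'I_n.+1) : poch b k / poch d k =
    \sum_(j < n.+1) poch (- k%:R) j / j`!%:R * (poch (d - b) j / poch d j).
  have kn : (k <= n)%N by rewrite -ltnS.
  pose G j := poch (- k%:R) j / j`!%:R * (poch (d - b) j / poch d j).
  rewrite -(@sumr_ord_widen _ G k n kn) => [|j /andP [kj _]]; last first.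
    by rewrite /G (poch_oppn_gt _ kj) !mul0r.
  by rewrite chu_vandermonde ?subKr // (poch_neq0_le dn kn).
have reflect j : (j <= n)%N -> poch (d - b) j * (-1) ^+ j * poch (c - a) (n - j) = poch (c - a) n.
  move=> jn; have -> : d - b = - (c - a + (n - j)%:R) - j%:R + 1.
    by rewrite eb ed natrB //; ring.
  have sq : (-1) ^+ j * (-1) ^+ j = 1 :> R by rewrite -exprMn mulrNN mulr1 expr1n.
  by rewrite -poch_reflect -(mulrA (poch _ j)) sq mulr1 mulrC -pochD subnK.
transitivity (\sum_(j < n.+1) poch (- n%:R) j / j`!%:R * (poch a j / poch d j) *
                (poch (c - a) n / poch c n)).
  transitivity (\sum_(k < n.+1) \sum_(j < n.+1) poch (- n%:R) k / k`!%:R *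
     (poch a k / poch c k) * (poch (- k%:R) j / j`!%:R * (poch (d - b) j / poch d j))).
    by apply: eq_bigr => k _; rewrite -mulr_sumr -expand invfM; ring.
  rewrite exchange_big /=; apply: eq_bigr => j _.
  have jn : (j <= n)%N by rewrite -ltnS.
  have dj := poch_neq0_le dn jn; have jf := fact_neq0 j.
  transitivity (poch (d - b) j / (j`!%:R * poch d j) *
    \sum_(k < n.+1) poch (- n%:R) k * (poch (- k%:R) j / k`!%:R) * (poch a k / poch c k)).
    by rewrite mulr_sumr; apply: eq_bigr => k _; rewrite invfM; ring.
  rewrite chu_vandermonde_falling // -(reflect j jn).
  by field; rewrite dj jf cn.
rewrite -mulr_suml chu_vandermonde // ed.
have -> : a + y + 1 - a = y + 1 by ring.
by rewrite invfM; ring.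
Qed.

End HypergeometricSums.

Section IndexSums.
Variables (p : nat) (l : 'I_p.+1 -> nat) (l' : 'I_p -> nat).
Hypothesis l_tail : forall j, l (lift ord0 j) = l' j.

Lemma vabs_recl : vabs l = (l ord0 + vabs l')%N.
Proof. by rewrite /vabs big_ord_recl; under eq_bigr do rewrite l_tail. Qed.

Lemma psum_ord0 : psum l ord0 = l ord0.
Proof. by rewrite /psum big_mkcond big_ord_recl /= big1 ?addn0. Qed.

Lemma psum_lift i : psum l (lift ord0 i) = (l ord0 + psum l' i)%N.
Proof.
rewrite /psum big_mkcond big_ord_recl [in RHS]big_mkcond /=; congr (_ + _)%N.
by apply: eq_bigr => j _; rewrite l_tail /bump /= !add1n ltnS.
Qed.

Lemma tsum_ord0 : tsum l ord0 = vabs l.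
Proof. exact: eq_bigl. Qed.

Lemma tsum_lift i : tsum l (lift ord0 i) = tsum l' i.
Proof.
rewrite /tsum big_mkcond big_ord_recl [in RHS]big_mkcond /= add0n.
by apply: eq_bigr => j _; rewrite l_tail /bump /= !add1n ltnS.
Qed.

Lemma tsum1_ord0 : tsum1 l ord0 = vabs l'.
Proof.
rewrite /tsum1 big_mkcond big_ord_recl /= add0n.
by apply: eq_bigr => j _; rewrite l_tail.
Qed.

Lemma tsum1_lift i : tsum1 l (lift ord0 i) = tsum1 l' i.
Proof.
rewrite /tsum1 big_mkcond big_ord_recl [in RHS]big_mkcond /= add0n.
by apply: eq_bigr => j _; rewrite l_tail /bump /= !add1n ltnS.
Qed.

End IndexSums.

Lemma tsum1_last p (l : 'I_p -> nat) (i : 'I_p) : ~~ (i.+1 < p)%N -> tsum1 l i = 0%N.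
Proof.
rewrite -leqNgt => ip; rewrite /tsum1 big1 // => j ij.
by have := ltn_ord j; lia.
Qed.

Lemma leq_tsum p (l : 'I_p -> nat) (i : 'I_p) : (l i <= tsum l i)%N.
Proof. by rewrite /tsum (bigD1 i) //= leq_addr. Qed.

Lemma leq_vabs p (l : 'I_p -> nat) (i : 'I_p) : (l i <= vabs l)%N.
Proof. by rewrite /vabs (bigD1 i) //= leq_addr. Qed.

Definition ffcons p T (a : T) (g : {ffun 'I_p -> T}) : {ffun 'I_p.+1 -> T} :=
  [ffun i => if unlift ord0 i is Some j then g j else a].

Lemma ffcons0 p T (a : T) (g : {ffun 'I_p -> T}) : ffcons a g ord0 = a.
Proof. by rewrite ffunE unlift_none. Qed.

Lemma ffconsS p T (a : T) (g : {ffun 'I_p -> T}) j : ffcons a g (lift ord0 j) = g j.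
Proof. by rewrite ffunE liftK. Qed.

Lemma sum_ffun_recl (V : nmodType) p (T : finType) (F : {ffun 'I_p.+1 -> T} -> V) :
  \sum_(f : {ffun 'I_p.+1 -> T}) F f = \sum_(a : T) \sum_(g : {ffun 'I_p -> T}) F (ffcons a g).
Proof.
rewrite pair_big /= (reindex (fun ag : T * {ffun 'I_p -> T} => ffcons ag.1 ag.2)) //.
apply: onW_bij; exists (fun f : {ffun 'I_p.+1 -> T} => (f ord0, [ffun j => f (lift ord0 j)])).
  by move=> [a g] /=; rewrite ffcons0; congr (_, _); apply/ffunP => j; rewrite ffunE ffconsS.
move=> f; apply/ffunP => i; rewrite ffunE /=.
by case: unliftP => [j ->|->]; rewrite ?ffunE.
Qed.

Section HahnSums.
Variable R : numFieldType.
Implicit Types (x b : R) (p k t M : nat).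

Definition hahn_factor p b (al : 'I_p -> R) (n l : 'I_p -> nat) (i : 'I_p) : R :=
  poch (- (n i)%:R) (l i) / (l i)`!%:R *
  (poch (al i + b + (psum n i)%:R + 1) (tsum l i) / poch (al i + 1) (tsum l i)) *
  (poch (al i + (n i)%:R + 1) (tsum1 l i) / poch (al i + b + (psum n i)%:R + 1) (tsum1 l i)).

(* The summand of the theorem divided by its l-independent factors
   (-N)_|n| * prod_i (alpha_i+1)_{n_i}/(alpha_i+beta+|n|+1)_{n_i}, see [hahnC_factor]. *)
Definition hahn_term p x b (al : 'I_p -> R) (n l : 'I_p -> nat) : R :=
  poch x (vabs l) / poch (x + b + 1) (vabs l) * \prod_(i < p) hahn_factor b al n l i.

(* The part of [hahn_term] involving l_1 = k, where t = l_2 + ... + l_p. *)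
Definition hahn_head x b (a0 : R) (n0 : nat) k t : R :=
  poch x (k + t) / poch (x + b + 1) (k + t) *
  (poch (- n0%:R) k / k`!%:R *
   (poch (a0 + b + n0%:R + 1) (k + t) / poch (a0 + 1) (k + t)) *
   (poch (a0 + n0%:R + 1) t / poch (a0 + b + n0%:R + 1) t)).

Lemma hahn_term_eq0 p x b al (n l : 'I_p -> nat) j :
  (n j < l j)%N -> hahn_term x b al n l = 0.
Proof.
move=> nl; rewrite /hahn_term (bigD1 j) //= /hahn_factor.
by rewrite (poch_oppn_gt _ nl) !mul0r mulr0.
Qed.

Section HahnTermRecl.
Variables (p : nat) (b : R) (al : 'I_p.+1 -> R) (n l : 'I_p.+1 -> nat) (l' : 'I_p -> nat).
Hypothesis l_tail : forall j, l (lift ord0 j) = l' j.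
Let al' j := al (lift ord0 j).
Let n' j := n (lift ord0 j).

Lemma hahn_factor_lift i :
  hahn_factor b al n l (lift ord0 i) = hahn_factor (b + (n ord0)%:R) al' n' l' i.
Proof.
rewrite /hahn_factor (psum_lift (fun _ => erefl)) (tsum_lift l_tail) (tsum1_lift l_tail).
by rewrite l_tail natrD !addrA (addrAC _ b).
Qed.

Lemma hahn_term_recl x :
  hahn_term x b al n l = hahn_head x b (al ord0) (n ord0) (l ord0) (vabs l') *
    \prod_(i < p) hahn_factor (b + (n ord0)%:R) al' n' l' i.
Proof.
rewrite /hahn_term big_ord_recl (eq_bigr _ (fun i _ => hahn_factor_lift i)).
rewrite {1}/hahn_factor psum_ord0 tsum_ord0 (tsum1_ord0 l_tail) (vabs_recl l_tail) /hahn_head.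
by ring.
Qed.

End HahnTermRecl.

Lemma sum_hahn_head x b (a0 : R) (n0 : nat) t M : (n0 <= M)%N ->
  poch (x + b + 1) (n0 + t) != 0 -> poch (a0 + 1) (n0 + t) != 0 ->
  poch (a0 + b + n0%:R + 1) t != 0 ->
  \sum_(k < M.+1) hahn_head x b a0 n0 k t =
  poch (a0 - x + 1) n0 / poch (a0 + 1) n0 * (poch (b + 1) n0 / poch (x + b + 1) n0) *
  (poch x t / poch (x + (b + n0%:R) + 1) t).
Proof.
move=> n0M xb a0n0 a0b.
rewrite -(@sumr_ord_widen _ (hahn_head x b a0 n0 ^~ t) n0 M n0M) => [|k /andP [nk _]]; last first.
  by rewrite /hahn_head (poch_oppn_gt _ nk) !mul0r mulr0.
have [xb1 xb2] := poch_neq0_split xb; have [a01 a02] := poch_neq0_split a0n0.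
rewrite addnC in xb a0n0.
have [xb3 xb4] := poch_neq0_split xb; have [a03 a04] := poch_neq0_split a0n0.
pose c := poch x t * poch (a0 + n0%:R + 1) t / (poch (x + b + 1) t * poch (a0 + 1) t).
have term (k : 'I_n0.+1) : hahn_head x b a0 n0 k t =
    c * (poch (- n0%:R) k / k`!%:R * (poch (x + t%:R) k * poch (a0 + 1 + t%:R + b + n0%:R) k /
         (poch (a0 + 1 + t%:R) k * poch (x + b + 1 + t%:R) k))).
  have kn : (k <= n0)%N by rewrite -ltnS.
  have := poch_neq0_le xb4 kn; have := poch_neq0_le a04 kn.
  rewrite /hahn_head /c addnC !pochD => h1 h2.
  have -> : a0 + b + n0%:R + 1 + t%:R = a0 + 1 + t%:R + b + n0%:R by ring.
  by field; rewrite fact_neq0 h1 h2 xb3 a03 a0b.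
rewrite (eq_bigr _ (fun (k : 'I__) _ => term k)) -mulr_sumr.
rewrite (@pfaff_saalschutz _ n0 _ _ _ _ b) //; last by ring.
rewrite /c.
have -> : a0 + 1 + t%:R - (x + t%:R) = a0 - x + 1 by ring.
have -> : x + (b + n0%:R) + 1 = x + b + 1 + n0%:R by ring.
have -> : a0 + n0%:R + 1 = a0 + 1 + n0%:R by ring.
have shift (a : R) : poch a t != 0 -> poch (a + t%:R) n0 = poch a n0 * poch (a + n0%:R) t / poch a t.
  by move=> at0; rewrite pochD_comm mulrAC mulfV // mul1r.
rewrite (shift _ a03) (shift _ xb3).
by field; rewrite a01 a02 xb1 xb2 a03 xb3.
Qed.

Section SumHahnTermRecl.
Variables (x b : R) (M p : nat) (al : 'I_p.+1 -> R) (n : 'I_p.+1 -> nat).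
Hypothesis n_le : forall i, (n i <= M)%N.
Hypothesis xb_n : poch (x + b + 1) (vabs n) != 0.
Hypothesis al_n : forall i, poch (al i + 1) (tsum n i) != 0.
Hypothesis alb_n : forall i, poch (al i + b + (psum n i)%:R + 1) (tsum1 n i) != 0.
Let al' j := al (lift ord0 j).
Let n' j := n (lift ord0 j).
Let n_tail : forall j, n (lift ord0 j) = n' j. Proof. by []. Qed.

Lemma sum_hahn_term_ffcons (g : {ffun 'I_p -> 'I_M.+1}) :
  \sum_(k < M.+1) hahn_term x b al n (fun i => nat_of_ord (ffcons k g i)) =
  poch (al ord0 - x + 1) (n ord0) / poch (al ord0 + 1) (n ord0) *
  (poch (b + 1) (n ord0) / poch (x + b + 1) (n ord0)) *
  hahn_term x (b + (n ord0)%:R) al' n' (fun i => nat_of_ord (g i)).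
Proof.
have [j gj | g_le] := pickP (fun j => n' j < g j)%N.
  rewrite (hahn_term_eq0 _ _ _ gj) mulr0 big1 // => k _.
  by apply: (@hahn_term_eq0 _ _ _ _ _ _ (lift ord0 j)); rewrite ffconsS.
have g_tail (k : 'I_M.+1) j : nat_of_ord (ffcons k g (lift ord0 j)) = g j by rewrite ffconsS.
have vg : (vabs (fun j => nat_of_ord (g j)) <= vabs n')%N.
  by apply: leq_sum => j _; rewrite leqNgt g_le.
have vn := vabs_recl n_tail.
under eq_bigr => k _ do rewrite (hahn_term_recl _ _ _ (g_tail k)) ffcons0.
rewrite -mulr_suml sum_hahn_head //.
- by rewrite /hahn_term; ring.
- by apply: poch_neq0_le xb_n _; rewrite vn leq_add2l.
- by apply: poch_neq0_le (al_n ord0) _; rewrite tsum_ord0 vn leq_add2l.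
- by have := alb_n ord0; rewrite psum_ord0 (tsum1_ord0 n_tail) => /poch_neq0_le; apply.
Qed.
End SumHahnTermRecl.

Lemma sum_hahn_term x M p : forall (n : 'I_p -> nat) (al : 'I_p -> R) b,
  (forall i, n i <= M)%N ->
  poch (x + b + 1) (vabs n) != 0 ->
  (forall i, poch (al i + 1) (tsum n i) != 0) ->
  (forall i, poch (al i + b + (psum n i)%:R + 1) (tsum1 n i) != 0) ->
  \sum_(l : {ffun 'I_p -> 'I_M.+1}) hahn_term x b al n (fun i => nat_of_ord (l i)) =
  poch (b + 1) (vabs n) / poch (x + b + 1) (vabs n) *
  \prod_(i < p) (poch (al i - x + 1) (n i) / poch (al i + 1) (n i)).
Proof.
elim: p => [|p IH] n al b n_le xb_n al_n alb_n.
  have vabs0 (f : 'I_0 -> nat) : vabs f = 0%N by rewrite /vabs big_ord0.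
  under eq_bigr do rewrite /hahn_term vabs0 big_ord0.
  by rewrite sumr_const card_ffun !card_ord vabs0 !poch0 big_ord0 !divr1 !mulr1.
have n_tail j : n (lift ord0 j) = n (lift ord0 j) by [].
have vn := vabs_recl n_tail.
have e1 : x + (b + (n ord0)%:R) + 1 = x + b + 1 + (n ord0)%:R by ring.
have e2 : b + (n ord0)%:R + 1 = b + 1 + (n ord0)%:R by ring.
rewrite sum_ffun_recl exchange_big /=.
under eq_bigr do rewrite sum_hahn_term_ffcons //.
rewrite -mulr_sumr IH.
- by rewrite vn !pochD big_ord_recl e1 e2 !invfM; ring.
- by move=> i; apply: n_le.
- by rewrite e1; move: xb_n; rewrite vn => /poch_neq0_split [].
- by move=> i; rewrite -(tsum_lift n_tail); apply: al_n.
- move=> i; have := alb_n (lift ord0 i); rewrite (psum_lift n_tail) (tsum1_lift n_tail).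
  by rewrite natrD !addrA (addrAC _ b).
Qed.

Lemma hahnC_factor N p (al : 'I_p -> R) b (n l : 'I_p -> nat) :
  hahnC N al b n l = poch (- N%:R) (vabs n) / poch (- N%:R) (vabs l) *
    \prod_(i < p) (poch (al i + 1) (n i) / poch (al i + b + (vabs n)%:R + 1) (n i)) *
    \prod_(i < p) hahn_factor b al n l i.
Proof.
have tail_all : \prod_(i < p | (i.+1 < p)%N)
    (poch (al i + (n i)%:R + 1) (tsum1 l i) / poch (al i + b + (psum n i)%:R + 1) (tsum1 l i)) =
  \prod_(i < p)
    (poch (al i + (n i)%:R + 1) (tsum1 l i) / poch (al i + b + (psum n i)%:R + 1) (tsum1 l i)).
  rewrite big_mkcond; apply: eq_bigr => i _; case: ifPn => // ip.
  by rewrite tsum1_last // !poch0 divr1.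
rewrite /hahnC tail_all -!mulrA; congr (_ * (_ * _)); rewrite -!big_split.
by apply: eq_bigr => i _; rewrite /= /hahn_factor; ring.
Qed.

End HahnSums.

Theorem mainTheorem1 (R : realFieldType) (p : nat) (n : 'I_p -> nat) (N : nat)
    (alpha : 'I_p -> R) (beta x : R) :
  (0 < p)%N ->
  (vabs n <= N)%N ->
  (forall l : 'I_p -> nat, (forall i, (l i <= n i)%N) ->
     [/\ poch (- (N%:R : R)) (vabs l) != 0,
         poch (x + beta + 1) (vabs l) != 0,
         (forall i, poch (alpha i + 1) (tsum l i) != 0) &
         (forall i : 'I_p, (i.+1 < p)%N ->
            poch (alpha i + beta + (psum n i)%:R + 1) (tsum1 l i) != 0)]) ->
  (forall i, poch (alpha i + beta + (vabs n)%:R + 1) (n i) != 0) ->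
  poch (x + beta + 1) (vabs n) != 0 ->
  \sum_(l : {ffun 'I_p -> 'I_N.+1} | [forall i, (l i <= n i)%N])
     (poch (- (N%:R : R)) (vabs (fun i => nat_of_ord (l i))) *
      poch x (vabs (fun i => nat_of_ord (l i))) /
      poch (x + beta + 1) (vabs (fun i => nat_of_ord (l i))) *
      hahnC N alpha beta n (fun i => nat_of_ord (l i)))
  = poch (beta + 1) (vabs n) * poch (- (N%:R : R)) (vabs n) / poch (x + beta + 1) (vabs n) *
    \prod_(q < p) (poch (alpha q - x + 1) (n q) /
                   poch (alpha q + beta + (vabs n)%:R + 1) (n q)).
Proof.
move=> _ nN l_neq0 albn_neq0 xbn_neq0.
have [_ _ aln_neq0 albn'_neq0] := l_neq0 n (fun=> leqnn _).
have alb_neq0 i : poch (alpha i + beta + (psum n i)%:R + 1) (tsum1 n i) != 0.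
  by case: (boolP (i.+1 < p)%N) => [/albn'_neq0 // | /tsum1_last ->]; rewrite poch0 oner_eq0.
pose A i := poch (alpha i + 1) (n i) / poch (alpha i + beta + (vabs n)%:R + 1) (n i).
transitivity (poch (- N%:R) (vabs n) * \prod_(i < p) A i *
  \sum_(l : {ffun 'I_p -> 'I_N.+1}) hahn_term x beta alpha n (fun i => nat_of_ord (l i))).
  rewrite mulr_sumr [LHS]big_mkcond; apply: eq_bigr => l _; case: ifPn => [/forallP l_le|].
    have [lN lx _ _] := l_neq0 _ l_le.
    by rewrite hahnC_factor /hahn_term; field; rewrite lN lx.
  rewrite negb_forall => /existsP [j]; rewrite -ltnNge => lj.
  by rewrite (@hahn_term_eq0 _ _ _ _ _ _ (fun i => nat_of_ord (l i)) _ lj) mulr0.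
rewrite sum_hahn_term // => [|i]; last exact: leq_trans (leq_vabs n i) nN.
have al_neq0 i : poch (alpha i + 1) (n i) != 0 := poch_neq0_le (aln_neq0 i) (leq_tsum n i).
rewrite [in RHS](eq_bigr (fun i => A i * (poch (alpha i - x + 1) (n i) / poch (alpha i + 1) (n i)))).
  by rewrite [in RHS]big_split /=; ring.
by move=> i _; rewrite /A; field; rewrite al_neq0 albn_neq0.
Qed.
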